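(* Let $q=p^k$ be an odd prime power and let $\alpha\in\mathbb{F}_{q^2}^*$ have multiplicative order $q+1$. Let $Q,R,S\in\{p^i:i\ge0\}$ and $N=Q+R+S$. Then $$x^{N}+\alpha^{R+S}x^{Q+q(R+S)}+\alpha^{Q+S}x^{R+q(Q+S)}+\alpha^{Q+R}x^{S+q(Q+R)}$$ is a permutation polynomial of $\mathbb{F}_{q^2}$ if and only if $\gcd(N,q-1)=1$.
   Context: A polynomial is a permutation polynomial of $\mathbb{F}_{q^2}$ if the map it induces on $\mathbb{F}_{q^2}$ is bijective. *)

From mathcomp Require Import all_boot all_order all_algebra all_field.
Set Implicit Arguments. Unset Strict Implicit. Unset Printing Implicit Defensive.
Import GRing.Theory.
Local Open Scope ring_scope.

Definition perm_poly (F : finFieldType) (P : {poly F}) : Prop :=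
  bijective (fun x : F => P.[x]).

Definition thm_poly (F : finFieldType) (q Q R S : nat) (alpha : F) : {poly F} :=
  'X^(Q + R + S)
  + alpha ^+ (R + S) *: 'X^(Q + q * (R + S))
  + alpha ^+ (Q + S) *: 'X^(R + q * (Q + S))
  + alpha ^+ (Q + R) *: 'X^(S + q * (Q + R)).

From mathcomp Require Import all_boot all_order all_algebra all_field cyclic.
From mathcomp Require Import ring zify.
Import GRing.Theory.
Local Open Scope ring_scope.
Set Implicit Arguments. Unset Strict Implicit.

(* Put q = p ^ k and T x = alpha * x ^+ q.  As alpha ^+ q.+1 = 1, T is an
   F_q-semilinear involution of F, so F = g F_q + d F_q for eigenvectors
   T g = g and T d = - d.  With N = Q + R + S, additivity of the p-power maps
   gives 2 f(x) = (x + T x) ^+ N + (x - T x) ^+ N, hence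
   2 f(g s + d t) = 2 ^+ N (g ^+ N s ^+ N + d ^+ N t ^+ N) for s, t in F_q.
   Since N is odd, g ^+ N and d ^+ N are again eigenvectors, for 1 and -1, of
   x |-> alpha ^+ N * x ^+ q, so f permutes F iff s |-> s ^+ N permutes F_q,
   i.e. iff gcd(N, q - 1) = 1. *)

Definition frob_fixed {R : pzRingType} (q : nat) := [pred s : R | s ^+ q == s].

Lemma pchar_natX (R : nzRingType) p n : p \in [pchar R] -> [pchar R].-nat (p ^ n)%N.
Proof.
by move=> pc; rewrite (eq_pnat _ (pcharf_eq pc)) pnatX pnat_id ?(pcharf_prime pc).
Qed.

Lemma pchar_odd_two_neq0 (R : nzRingType) p : p \in [pchar R] -> odd p -> (2 : R) != 0.
Proof.
move=> pc po; rewrite -(dvdn_pcharf pc) dvdn_prime2 ?(pcharf_prime pc) //.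
by apply/eqP=> p2; rewrite p2 in po.
Qed.

Lemma finField_prim_root_exists (F : finFieldType) :
  exists z : F, #|F|.-1.-primitive_root z.
Proof.
have F1 := finNzRing_gt1 F.
have : has #|F|.-1.-primitive_root (enum (predC1 (0 : F))).
  apply: has_prim_root; rewrite ?enum_uniq -?cardE ?cardC1 -?subn1 ?subn_gt0 //.
  apply/allP=> x; rewrite mem_enum /= => x0; rewrite unity_rootE; apply/eqP.
  by apply: (mulIf x0); rewrite mul1r -exprSr subn1 prednK ?expf_card // ltnW.
by case/hasP=> z _; exists z.
Qed.

Lemma finField_exprn_onto (F : finFieldType) m n (c : F) :
  (m * n)%N = #|F|.-1 -> c ^+ n = 1 -> exists g : F, g ^+ m = c.
Proof.
move=> mn cn; have n0 : (0 < n)%N.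
  by case: n mn {cn} => // /eqP; rewrite muln0 eq_sym -subn1 subn_eq0 leqNgt finNzRing_gt1.
have [z] := finField_prim_root_exists F; rewrite -mn => pz.
have [i ci] : {i : 'I_(m * n) | c = z ^+ i}.
  by apply: (prim_rootP pz); rewrite mulnC exprM cn expr1n.
move: cn; rewrite ci -exprM => /eqP; rewrite -(prim_order_dvd pz) dvdn_pmul2r //.
by case/dvdnP=> j ->; exists (z ^+ j); rewrite -exprM.
Qed.

Lemma exists_frob_eigenvector (F : finFieldType) q (beta : F) :
  #|F| = (q ^ 2)%N -> (1 < q)%N -> beta ^+ q.+1 = 1 -> exists2 g : F, g != 0 & beta * g ^+ q = g.
Proof.
move=> cardF q1 bq.
have b0 : beta != 0 by apply: contra_eq_neq bq => ->; rewrite expr0n eq_sym oner_neq0.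
have [g gq] : exists g : F, g ^+ (q - 1) = beta^-1.
  by apply: (@finField_exprn_onto _ _ q.+1); rewrite ?exprVn ?bq ?invr1 // cardF; nia.
have g0 : g != 0.
  by apply: contra_eq_neq gq => ->; rewrite expr0n subn_eq0 leqNgt q1 eq_sym invr_eq0.
exists g => //; rewrite -[q in g ^+ q](subnK (ltnW q1)) exprD gq expr1.
by rewrite mulrA mulfV ?mul1r.
Qed.

Section FrobeniusEigenbasis.

Variables (F : fieldType) (q : nat) (alpha g d : F).
Hypotheses (qnat : [pchar F].-nat q) (two_neq0 : (2 : F) != 0).
Hypotheses (g_neq0 : g != 0) (d_neq0 : d != 0).
Hypotheses (alpha_g : alpha * g ^+ q = g) (alpha_d : alpha * d ^+ q = - d).

Lemma frob_eigen_coord_inj (a1 b1 a2 b2 : F) :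
  a1 \in frob_fixed q -> b1 \in frob_fixed q ->
  a2 \in frob_fixed q -> b2 \in frob_fixed q ->
  g * a1 + d * b1 = g * a2 + d * b2 -> a1 = a2 /\ b1 = b2.
Proof.
rewrite !inE => /eqP a1_fixed /eqP b1_fixed /eqP a2_fixed /eqP b2_fixed E.
have E' : g * a1 - d * b1 = g * a2 - d * b2.
  have := congr1 (fun x => alpha * x ^+ q) E; rewrite /= !exprDn_pchar // !exprMn.
  by rewrite a1_fixed b1_fixed a2_fixed b2_fixed !mulrDr !mulrA alpha_g alpha_d !mulNr.
have Ea : 2 * (g * a1) = 2 * (g * a2).
  transitivity ((g * a1 + d * b1) + (g * a1 - d * b1)); first by ring.
  by rewrite E E'; ring.
have a12 : a1 = a2 by apply: (mulfI g_neq0); apply: (mulfI two_neq0).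
by split=> //; move: E; rewrite a12 => /addrI /(mulfI d_neq0).
Qed.

Hypotheses (frobK : forall x : F, x ^+ q ^+ q = x) (alpha_q1 : alpha ^+ q.+1 = 1).

Lemma frob_eigen_decomp (x : F) :
  exists s, exists2 t, s \in frob_fixed q /\ t \in frob_fixed q & x = g * s + d * t.
Proof.
have alpha_neq0 : alpha != 0.
  by apply: contra_eq_neq alpha_q1 => ->; rewrite expr0n eq_sym oner_neq0.
have alpha_q : alpha ^+ q = alpha^-1.
  by apply: (mulIf alpha_neq0); rewrite -exprSr alpha_q1 mulVf.
have g_q : g ^+ q = alpha^-1 * g by rewrite -{2}alpha_g mulKf.
have d_q : d ^+ q = - (alpha^-1 * d) by rewrite -mulrN -alpha_d mulKf.
have two_q : (2 : F) ^+ q = 2 by rewrite exprDn_pchar // expr1n.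
exists ((x + alpha * x ^+ q) / (2 * g)); exists ((x - alpha * x ^+ q) / (2 * d)).
- rewrite !inE; split; apply/eqP; rewrite !exprMn !exprVn exprDn_pchar // !exprMn.
  + by rewrite frobK alpha_q g_q two_q; field; rewrite g_neq0 two_neq0 alpha_neq0.
  + rewrite exprNn_pchar // exprMn frobK alpha_q d_q two_q.
    by field; rewrite oppr_eq0 d_neq0 two_neq0 alpha_neq0.
- by field; rewrite d_neq0 g_neq0 two_neq0.
Qed.

End FrobeniusEigenbasis.

Lemma frob_fixed_expr_injP (F : finFieldType) q N :
  (0 < N)%N -> (1 < q)%N -> (q - 1 %| #|F|.-1)%N ->
  {in frob_fixed q &, injective (fun s : F => s ^+ N)} <-> gcdn N (q - 1) = 1%N.
Proof.
move=> N_gt0 q_gt1 q1F; have q1E x : x ^+ q = x ^+ (q - 1) * x.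
  by rewrite -exprSr subn1 prednK // ltnW.
split=> [injN | gN s t].
- apply/eqP; apply: contraT => gN1; set e := gcdn N (q - 1) in gN1.
  have e_gt1 : (1 < e)%N by rewrite ltn_neqAle eq_sym gN1 gcdn_gt0 N_gt0.
  have [z pz] := finField_prim_root_exists F.
  have /(dvdn_prim_root pz) pzeta : (e %| #|F|.-1)%N := dvdn_trans (dvdn_gcdr _ _) q1F.
  set zeta := z ^+ _ in pzeta.
  have zeta_q1 : zeta ^+ (q - 1) = 1.
    by apply/eqP; rewrite -(prim_order_dvd pzeta) dvdn_gcdr.
  have zeta_fixed : zeta \in frob_fixed q by rewrite inE q1E zeta_q1 mul1r.
  have zetaN : zeta ^+ N = 1 ^+ N.
    by apply/eqP; rewrite expr1n -(prim_order_dvd pzeta) dvdn_gcdl.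
  have zeta1 : zeta = 1 by apply: injN; rewrite // inE expr1n.
  by have := eq_prim_root_expr pzeta 1 0; rewrite expr1 expr0 zeta1 eqxx modn_small ?mod0n.
- rewrite !inE => /eqP s_fixed /eqP t_fixed /= st_N.
  have [t0 | t_neq0] := eqVneq t 0.
    by move/eqP: st_N; rewrite t0 expr0n gtn_eqF //= expf_eq0 N_gt0 => /eqP.
  have rN : (s / t) ^+ N = 1 by rewrite exprMn exprVn st_N divff // expf_neq0.
  have r_neq0 : s / t != 0.
    by apply: contra_eq_neq rN => ->; rewrite expr0n gtn_eqF //= eq_sym oner_neq0.
  have rq : (s / t) ^+ (q - 1) = 1.
    by apply: (mulIf r_neq0); rewrite -q1E mul1r exprMn exprVn s_fixed t_fixed.
  have [m pr mN] := prim_order_exists N_gt0 rN.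
  have : (m %| 1)%N by rewrite -gN dvdn_gcd mN (prim_order_dvd pr) rq eqxx.
  by rewrite dvdn1 => /eqP m1; apply: divr1_eq; have := prim_expr_order pr; rewrite m1.
Qed.

Lemma thm_poly_double (F : finFieldType) q Q R S (alpha x : F) :
  [pchar F].-nat Q -> [pchar F].-nat R -> [pchar F].-nat S ->
  let y := alpha * x ^+ q in
  2 * (thm_poly q Q R S alpha).[x] = (x + y) ^+ (Q + R + S) + (x - y) ^+ (Q + R + S).
Proof.
move=> hQ hR hS y.
have -> : (thm_poly q Q R S alpha).[x] =
    x ^+ Q * x ^+ R * x ^+ S + x ^+ Q * y ^+ R * y ^+ S
    + y ^+ Q * x ^+ R * y ^+ S + y ^+ Q * y ^+ R * x ^+ S.
  by rewrite /y /thm_poly !hornerE !exprD !exprM !exprD !exprMn; ring.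
by rewrite !exprD !exprDn_pchar // !exprNn_pchar //; ring.
Qed.

Section PermutationCriterion.

Variables (F : finFieldType) (q Q R S : nat) (alpha g d : F).
Hypotheses (qnat : [pchar F].-nat q) (two_neq0 : (2 : F) != 0).
Hypotheses (g_neq0 : g != 0) (d_neq0 : d != 0).
Hypotheses (alpha_g : alpha * g ^+ q = g) (alpha_d : alpha * d ^+ q = - d).
Hypotheses (frobK : forall x : F, x ^+ q ^+ q = x) (alpha_q1 : alpha ^+ q.+1 = 1).
Hypotheses (Qnat : [pchar F].-nat Q) (Rnat : [pchar F].-nat R) (Snat : [pchar F].-nat S).
Hypothesis N_odd : odd (Q + R + S).

Local Notation N := (Q + R + S)%N.
Local Notation f := (thm_poly q Q R S alpha).

Lemma thm_poly_eigen (s t : F) : s \in frob_fixed q -> t \in frob_fixed q ->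
  2 * f.[g * s + d * t] = 2 ^+ N * (g ^+ N * s ^+ N + d ^+ N * t ^+ N).
Proof.
rewrite !inE => /eqP s_fixed /eqP t_fixed; rewrite thm_poly_double //.
have -> : alpha * (g * s + d * t) ^+ q = g * s - d * t.
  by rewrite exprDn_pchar // !exprMn s_fixed t_fixed mulrDr !mulrA alpha_g alpha_d mulNr.
have -> : g * s + d * t + (g * s - d * t) = 2 * (g * s) by ring.
have -> : g * s + d * t - (g * s - d * t) = 2 * (d * t) by ring.
by rewrite !exprMn mulrDr.
Qed.

Lemma perm_thm_polyP :
  perm_poly f <-> {in frob_fixed q &, injective (fun s : F => s ^+ N)}.
Proof.
have fixed0 : (0 : F) \in frob_fixed q.
  by case/andP: qnat => q_gt0 _; rewrite inE -(prednK q_gt0) exprS mul0r.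
split=> [/bij_inj f_inj s t s_fixed t_fixed /= st_N | injN].
  have : g * s + d * 0 = g * t + d * 0.
    by apply: f_inj; apply: (mulfI two_neq0); rewrite /= !thm_poly_eigen // st_N.
  by rewrite !mulr0 !addr0 => /(mulfI g_neq0).
have decomp := frob_eigen_decomp qnat two_neq0 g_neq0 d_neq0 alpha_g alpha_d frobK alpha_q1.
apply: injF_bij => x1 x2 /= /(congr1 (fun w => 2 * w)) /=.
have [s1 [t1 [s1_fixed t1_fixed] ->]] := decomp x1.
have [s2 [t2 [s2_fixed t2_fixed] ->]] := decomp x2.
rewrite !thm_poly_eigen // => /(mulfI (expf_neq0 _ two_neq0)) E.
have alpha_gN : alpha ^+ N * (g ^+ N) ^+ q = g ^+ N by rewrite exprAC -exprMn alpha_g.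
have alpha_dN : alpha ^+ N * (d ^+ N) ^+ q = - d ^+ N.
  by rewrite exprAC -exprMn alpha_d exprNn -signr_odd N_odd mulN1r.
have fixedN (s : F) : s \in frob_fixed q -> s ^+ N \in frob_fixed q.
  by rewrite !inE exprAC => /eqP ->.
have [/injN-> // /injN-> //] := frob_eigen_coord_inj qnat two_neq0
  (expf_neq0 _ g_neq0) (expf_neq0 _ d_neq0) alpha_gN alpha_dN
  (fixedN _ s1_fixed) (fixedN _ t1_fixed) (fixedN _ s2_fixed) (fixedN _ t2_fixed) E.
Qed.

End PermutationCriterion.

Theorem mainTheorem11 (F : finFieldType) (p k : nat) (alpha : F) (Q R S : nat) :
  prime p -> odd p -> (0 < k)%N ->
  #|F| = ((p ^ k) ^ 2)%N ->
  (p ^ k).+1.-primitive_root alpha ->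
  (exists i, Q = (p ^ i)%N) -> (exists i, R = (p ^ i)%N) -> (exists i, S = (p ^ i)%N) ->
  (perm_poly (thm_poly (p ^ k) Q R S alpha) <->
   gcdn (Q + R + S) ((p ^ k) - 1) = 1%N).
Proof.
move=> p_prime p_odd k_gt0 cardF alpha_prim [a ->] [b ->] [e ->].
have pc : p \in [pchar F] by apply: (@card_finPcharP _ _ (k * 2)); rewrite ?expnM.
have pnatX i : [pchar F].-nat (p ^ i)%N := pchar_natX i pc.
set q := (p ^ k)%N in cardF alpha_prim *.
have q_gt1 : (1 < q)%N by rewrite -(expn0 p) ltn_exp2l ?prime_gt1.
have q_odd : odd q by rewrite oddX p_odd orbT.
have frobK (x : F) : x ^+ q ^+ q = x by rewrite -exprM mulnn -cardF expf_card.
have alpha_q1 := prim_expr_order alpha_prim.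
have [g g_neq0 alpha_g] := exists_frob_eigenvector cardF q_gt1 alpha_q1.
have [d d_neq0 alpha_d] : exists2 d : F, d != 0 & - alpha * d ^+ q = d.
  by apply: exists_frob_eigenvector; rewrite // exprNn -signr_odd /= q_odd mul1r.
have {}alpha_d : alpha * d ^+ q = - d by apply: oppr_inj; rewrite opprK -mulNr.
have N_odd : odd (p ^ a + p ^ b + p ^ e) by rewrite !oddD !oddX p_odd !orbT.
rewrite (perm_thm_polyP (pnatX k) (pchar_odd_two_neq0 pc p_odd) g_neq0 d_neq0 alpha_g
  alpha_d frobK alpha_q1 (pnatX a) (pnatX b) (pnatX e) N_odd).
apply: frob_fixed_expr_injP => //; first exact: odd_gt0.
by rewrite cardF (_ : (q ^ 2).-1 = (q - 1) * q.+1)%N ?dvdn_mulr //; nia.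
Qed.
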